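(* Let $\alpha,\beta,\gamma\in C^\infty(\mathbb R)$ and, for $\phi\in C^\infty(\mathbb R)$, let $Q_\phi=\sum_{n\ge0}\hbar^{2n}\frac{\alpha(u)^n\phi^{(n)}(u)}{n!}u_x^{2n+1}$. Then the flows $u_{\tau_\beta}=Q_\beta$ and $u_{\tau_\gamma}=Q_\gamma$ commute, i.e. $Q_\beta'[Q_\gamma]-Q_\gamma'[Q_\beta]=0$ as formal series in $\hbar$.
   Context: $u_k=\partial_x^ku$; total derivative $D=\sum_{r\ge0}u_{r+1}\partial/\partial u_r$ ($u_0=u$); Fréchet derivative $P'[V]=\sum_{r\ge0}\frac{\partial P}{\partial u_r}D^rV$, extended coefficientwise to formal series in the formal parameter $\hbar$. $\phi^{(n)}$ is the $n$-th derivative. *)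

From Stdlib Require Import Reals.
From Coquelicot Require Import Coquelicot.
Open Scope R_scope.

(* A point of the jet space: j r is the value of u_r = d^r u / dx^r (u_0 = u). *)
Definition jet := nat -> R.

Definition dfun := jet -> R.

Definition jset (j : jet) (r : nat) (t : R) : jet :=
  fun k => if Nat.eqb k r then t else j k.

Definition pder (r : nat) (f : dfun) : dfun :=
  fun j => Derive (fun t => f (jset j r t)) (j r).

Definition Dtot (f : dfun) : dfun :=
  fun j => Series (fun r => j (S r) * pder r f j).

Definition frechet (P V : dfun) : dfun :=
  fun j => Series (fun r => pder r P j * Nat.iter r Dtot V j).

(* Formal power series in hbar with differential-function coefficients:
   S k is the coefficient of hbar^k. *)
Definition fser := nat -> dfun.

Definition frechet_ser (P V : fser) : fser :=
  fun k j => sum_f_R0 (fun i => frechet (P i) (V (k - i)%nat) j) k.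

Definition Qser (alpha phi : R -> R) : fser :=
  fun k j =>
    if Nat.even k then
      let n := Nat.div2 k in
      (alpha (j 0%nat)) ^ n * Derive_n phi n (j 0%nat) / INR (Factorial.fact n)
        * (j 1%nat) ^ (2 * n + 1)
    else 0.

Definition smooth (f : R -> R) : Prop := forall (n : nat) (x : R), ex_derive_n f n x.

From Stdlib Require Import Reals Factorial Lia Lra FunctionalExtensionality.
From Coquelicot Require Import Coquelicot.
Open Scope R_scope.

(* Every hbar-coefficient of Q_phi has the form f(u) u_x^m.  For two such
   functions the commutator of Frechet derivatives is
   ((m-1) f g' - (l-1) f' g) u_x^(m+l), so the hbar^k coefficient of
   Q_beta'[Q_gamma] - Q_gamma'[Q_beta] is u_x^(k+2) times a sum, over
   i + i' = k, of scalar brackets of the coefficients.  Odd indices contribute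
   nothing; for k = 2N the alpha' terms cancel inside each bracket and the
   remaining sum over a + b = N telescopes. *)

Lemma Series_support2 (a : nat -> R) :
  (forall r, (2 <= r)%nat -> a r = 0) -> Series a = a 0%nat + a 1%nat.
Proof.
  intros Ha. apply is_series_unique.
  apply filterlim_ext_loc with (f := fun _ => a 0%nat + a 1%nat).
  - exists 1%nat. intros n Hn. induction n as [|n IH]; [lia|].
    destruct n as [|n].
    + rewrite sum_Sn, sum_O. reflexivity.
    + rewrite sum_Sn, <- IH, (Ha (S (S n))) by lia. unfold plus; simpl. ring.
  - apply filterlim_const.
Qed.

Definition ux_monomial (f : R -> R) (m : nat) : dfun :=
  fun j => f (j 0%nat) * j 1%nat ^ m.

Lemma pder_ux_monomial_ge2 f m j r : (2 <= r)%nat -> pder r (ux_monomial f m) j = 0.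
Proof.
  intros Hr. unfold pder, ux_monomial, jset.
  rewrite (Derive_ext _ (fun _ => f (j 0%nat) * j 1%nat ^ m)); [apply Derive_const|].
  intros t. destruct r as [|[|r]]; [lia|lia|reflexivity].
Qed.

Lemma pder0_ux_monomial f m j :
  pder 0 (ux_monomial f m) j = Derive f (j 0%nat) * j 1%nat ^ m.
Proof. unfold pder, ux_monomial, jset; simpl. apply Derive_scal_l. Qed.

Lemma pder1_ux_monomial f m j :
  pder 1 (ux_monomial f m) j = f (j 0%nat) * (INR m * j 1%nat ^ pred m).
Proof.
  unfold pder, ux_monomial, jset; simpl.
  rewrite Derive_scal, Derive_pow, Derive_id by apply ex_derive_id. f_equal. ring.
Qed.

Lemma Dtot_ux_monomial g l j : Dtot (ux_monomial g l) j =
  j 1%nat * (Derive g (j 0%nat) * j 1%nat ^ l)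
  + j 2%nat * (g (j 0%nat) * (INR l * j 1%nat ^ pred l)).
Proof.
  unfold Dtot. rewrite Series_support2, pder0_ux_monomial, pder1_ux_monomial; [reflexivity|].
  intros r Hr. rewrite pder_ux_monomial_ge2 by exact Hr. ring.
Qed.

Lemma frechet_ux_monomial f m g l j : frechet (ux_monomial f m) (ux_monomial g l) j =
  Derive f (j 0%nat) * j 1%nat ^ m * (g (j 0%nat) * j 1%nat ^ l)
  + f (j 0%nat) * (INR m * j 1%nat ^ pred m) * Dtot (ux_monomial g l) j.
Proof.
  unfold frechet. rewrite Series_support2, pder0_ux_monomial, pder1_ux_monomial; [reflexivity|].
  intros r Hr. rewrite pder_ux_monomial_ge2 by exact Hr. ring.
Qed.

Lemma frechet_ux_monomial_comm f m g l j :
  frechet (ux_monomial f m) (ux_monomial g l) j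
  - frechet (ux_monomial g l) (ux_monomial f m) j =
  ((INR m - 1) * f (j 0%nat) * Derive g (j 0%nat)
   - (INR l - 1) * Derive f (j 0%nat) * g (j 0%nat)) * j 1%nat ^ (m + l).
Proof.
  rewrite !frechet_ux_monomial, !Dtot_ux_monomial, pow_add.
  destruct m, l; cbn [pred pow INR]; rewrite ?S_INR; ring.
Qed.

Lemma sum_f_R0_rev (a : nat -> R) k : sum_f_R0 a k = sum_f_R0 (fun i => a (k - i)%nat) k.
Proof.
  induction k as [|k IHk]; [reflexivity|].
  rewrite decomp_sum with (N := S k) (An := fun i => a (S k - i)%nat) by lia.
  simpl pred. rewrite tech5, IHk. replace (S k - 0)%nat with (S k) by lia.
  simpl. ring.
Qed.

Lemma frechet_ser_comm_ux_monomial (p q : nat -> R -> R) k j :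
  frechet_ser (fun i => ux_monomial (p i) (S i)) (fun i => ux_monomial (q i) (S i)) k j
  - frechet_ser (fun i => ux_monomial (q i) (S i)) (fun i => ux_monomial (p i) (S i)) k j =
  sum_f_R0 (fun i => INR i * p i (j 0%nat) * Derive (q (k - i)%nat) (j 0%nat)
    - INR (k - i) * Derive (p i) (j 0%nat) * q (k - i)%nat (j 0%nat)) k
  * j 1%nat ^ S (S k).
Proof.
  unfold frechet_ser.
  rewrite (sum_f_R0_rev (fun i => frechet (ux_monomial (q i) _) _ j)),
    <- minus_sum, Rmult_comm, scal_sum.
  apply sum_eq. intros i Hi.
  replace (k - (k - i))%nat with i by lia.
  rewrite frechet_ux_monomial_comm, !S_INR.
  replace (S i + S (k - i))%nat with (S (S k)) by lia. ring.
Qed.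

Definition Qcoef (alpha phi : R -> R) (n : nat) : R -> R :=
  fun u => alpha u ^ n * Derive_n phi n u / INR (fact n).

Definition Qser_coef (alpha phi : R -> R) (k : nat) : R -> R :=
  if Nat.even k then Qcoef alpha phi (Nat.div2 k) else fun _ => 0.

Lemma Qser_ux_monomial alpha phi :
  Qser alpha phi = fun k => ux_monomial (Qser_coef alpha phi k) (S k).
Proof.
  apply functional_extensionality; intro k; apply functional_extensionality; intro j.
  unfold Qser, ux_monomial, Qser_coef, Qcoef.
  destruct (Nat.even k) eqn:Ek; [|ring].
  replace (2 * Nat.div2 k + 1)%nat with (S k); [reflexivity|].
  pose proof (Nat.div2_odd k) as Hk. rewrite <- Nat.negb_even, Ek in Hk. simpl in Hk. lia.
Qed.

Lemma Qser_coef_double alpha phi n : Qser_coef alpha phi (2 * n) = Qcoef alpha phi n.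
Proof. unfold Qser_coef. rewrite Nat.even_mul, Nat.div2_double. reflexivity. Qed.

Lemma Qser_coef_odd alpha phi k :
  Nat.even k = false -> Qser_coef alpha phi k = fun _ => 0.
Proof. unfold Qser_coef. intros ->. reflexivity. Qed.

Lemma Derive_Qcoef alpha phi n u : smooth alpha -> smooth phi ->
  Derive (Qcoef alpha phi n) u =
  (INR n * Derive alpha u * alpha u ^ pred n * Derive_n phi n u
   + alpha u ^ n * Derive_n phi (S n) u) / INR (fact n).
Proof.
  intros Ha Hphi. unfold Qcoef, Rdiv.
  rewrite Derive_scal_l, Derive_mult, Derive_pow; [simpl; ring | ..].
  - exact (Ha 1%nat u).
  - apply ex_derive_pow, (Ha 1%nat u).
  - exact (Hphi (S n) u).
Qed.

Lemma sum_f_R0_telescope (v : nat -> R) N :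
  sum_f_R0 (fun a => v a - v (S a)) N = v 0%nat - v (S N).
Proof. induction N as [|N IHN]; [simpl; ring|]. rewrite tech5, IHN. ring. Qed.

Lemma sum_f_R0_even (h : nat -> R) N : (forall i, Nat.even i = false -> h i = 0) ->
  sum_f_R0 h (2 * N) = sum_f_R0 (fun a => h (2 * a)%nat) N.
Proof.
  intros Hodd. induction N as [|N IHN]; [reflexivity|].
  replace (2 * S N)%nat with (S (S (2 * N))) by lia.
  rewrite !tech5, IHN, (Hodd (S (2 * N))).
  - replace (S (S (2 * N))) with (2 * S N)%nat by lia. ring.
  - rewrite Nat.even_succ, Nat.odd_mul. reflexivity.
Qed.

Section Bracket.

Variables alpha beta gamma : R -> R.
Hypotheses (Ha : smooth alpha) (Hb : smooth beta) (Hg : smooth gamma).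

(* alpha^N beta^(a) gamma^(N+1-a) / ((a-1)! (N-a)!), written with a and N+1-a
   in the numerator so that it is defined, and vanishes, at a = 0 and a = N+1. *)
Definition Qcoef_tele (N a : nat) (u : R) : R :=
  alpha u ^ N * Derive_n beta a u * Derive_n gamma (S N - a) u * INR a * INR (S N - a)
  / (INR (fact a) * INR (fact (S N - a))).

Lemma Qcoef_bracket_tele a b u :
  INR a * Qcoef alpha beta a u * Derive (Qcoef alpha gamma b) u
  - INR b * Derive (Qcoef alpha beta a) u * Qcoef alpha gamma b u
  = Qcoef_tele (a + b) a u - Qcoef_tele (a + b) (S a) u.
Proof.
  rewrite !Derive_Qcoef by assumption. unfold Qcoef_tele, Qcoef.
  replace (S (a + b) - a)%nat with (S b) by lia.
  replace (S (a + b) - S a)%nat with b by lia.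
  rewrite pow_add. simpl Derive_n.
  destruct a as [|a]; destruct b as [|b]; cbn [pred pow];
    rewrite ?fact_simpl, ?mult_INR; change (INR 0) with 0;
    field; repeat split; (apply INR_fact_neq_0 || (apply not_0_INR; discriminate)).
Qed.

Lemma Qser_coef_bracket_sum k u :
  sum_f_R0 (fun i =>
    INR i * Qser_coef alpha beta i u * Derive (Qser_coef alpha gamma (k - i)) u
    - INR (k - i) * Derive (Qser_coef alpha beta i) u * Qser_coef alpha gamma (k - i) u) k = 0.
Proof.
  destruct (Nat.even k) eqn:Ek.
  - apply Nat.even_spec in Ek as [N ->].
    rewrite sum_f_R0_even.
    2:{ intros i Hi. rewrite Qser_coef_odd, Derive_const by exact Hi. ring. }
    rewrite (sum_eq _ (fun a => 2 * Qcoef_tele N a u - 2 * Qcoef_tele N (S a) u)).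
    + rewrite sum_f_R0_telescope. unfold Qcoef_tele.
      rewrite Nat.sub_diag. simpl INR. unfold Rdiv. ring.
    + intros a Ha'.
      replace (2 * N - 2 * a)%nat with (2 * (N - a))%nat by lia.
      rewrite !Qser_coef_double, !mult_INR.
      pose proof (Qcoef_bracket_tele a (N - a) u) as Hbr.
      replace (a + (N - a))%nat with N in Hbr by lia.
      simpl INR. lra.
  - apply sum_eq_R0. intros i Hi. destruct (Nat.even i) eqn:Ei.
    + rewrite (Qser_coef_odd _ _ (k - i)), Derive_const; [ring|].
      rewrite Nat.even_sub, Ek, Ei by exact Hi. reflexivity.
    + rewrite (Qser_coef_odd _ _ i), Derive_const by exact Ei. ring.
Qed.

End Bracket.

Theorem mainTheorem7 (alpha beta gamma : R -> R)
  (Ha : smooth alpha) (Hb : smooth beta) (Hg : smooth gamma) :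
  forall (k : nat) (j : jet),
    frechet_ser (Qser alpha beta) (Qser alpha gamma) k j
    - frechet_ser (Qser alpha gamma) (Qser alpha beta) k j = 0.
Proof.
  intros k j.
  rewrite !Qser_ux_monomial, frechet_ser_comm_ux_monomial,
    Qser_coef_bracket_sum by assumption.
  ring.
Qed.
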